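(* Let $c$ be a natural number and let $X$ be a finite set of natural numbers, all greater than $2$, which is $(\omega^{c+3}+\omega^3+c+4)$-large. Then every colouring $C\colon[X]^2\to\{0,\dots,c-1\}$ has a homogeneous set $H\subseteq X$ (i.e. $C$ is constant on $[H]^2$) with $|H|>\min H$.
   Context: Ordinals are notations below $\varepsilon_0$: formal sums $\omega^{\alpha_0}+\dots+\omega^{\alpha_n}$ with non-increasing exponents, ordered lexicographically. $+$ is ordinal addition, $k=1+\dots+1$ with $1=\omega^0$, and $\omega=\omega^1$. Fundamental sequences, for $\alpha=\omega^{\alpha_0}+\dots+\omega^{\alpha_n}$ and $x\in\mathbb{N}$: $0[x]=0$. If $\alpha_n=0$ then $\alpha[x]=\omega^{\alpha_0}+\dots+\omega^{\alpha_{n-1}}$. If $\alpha_n=\beta+1$ then $\alpha[x]=\omega^{\alpha_0}+\dots+\omega^{\alpha_{n-1}}+\omega^\beta\cdot x$ ($x$ copies of $\omega^\beta$). If $\alpha_n$ is a nonzero non-successor then $\alpha[x]=\omega^{\alpha_0}+\dots+\omega^{\alpha_{n-1}}+\omega^{\alpha_n[x]}$. A finite set $X=\{x_0<\dots<x_{|X|-1}\}$ is $\alpha$-large if $\alpha[x_0]\cdots[x_{|X|-1}]=0$. $[X]^2$ is the set of 2-element subsets of $X$. *)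

From mathcomp Require Import all_boot.
Set Implicit Arguments. Unset Strict Implicit. Unset Printing Implicit Defensive.

(* CNF a = C [:: a_0; ...; a_n] denotes omega^a_0 + ... + omega^a_n. *)
Inductive ON : Type := C : seq ON -> ON.

Definition ozero : ON := C [::].
Definition ofin (k : nat) : ON := C (nseq k ozero).
Definition opow (b : ON) : ON := C [:: b].

(* For the last exponent e = a_n:
   e = 0               : drop the last term;
   e = b + 1 (i.e. the last term of e is omega^0, b = e minus that term):
                         replace omega^e by x copies of omega^b;
   e nonzero limit     : replace omega^e by omega^(e[x]). *)
Fixpoint fs (a : ON) (x : nat) {struct a} : ON :=
  match a with
  | C l =>
    let fix go (l : seq ON) : seq ON :=
      match l with
      | [::] => [::]
      | [:: e] =>
          match e with
          | C [::] => [::]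
          | C el =>
              match last ozero el with
              | C [::] => nseq x (C (take (size el).-1 el))
              | _ => [:: fs e x]
              end
          end
      | e :: r => e :: go r
      end
    in C (go l)
  end.

Definition fs_iter (a : ON) (X : seq nat) : ON := foldl fs a X.

(* X (given by its strictly increasing enumeration) is a-large *)
Definition large (a : ON) (X : seq nat) : Prop := fs_iter a X = ozero.

(* The finite part uses up the first c + 4
   elements of X, so the omega^(c+3)-large block D that follows lies above c + 6.

   Ordinals below omega^N are coefficient vectors w, and "Y has an exactly
   (sum_i omega^i * w i)-large subsequence" behaves like the natural sum: if Y is (A + B)-large,
   then for any predicate p either the elements of Y satisfying p form an A-large set or the
   others form a B-large set.

   The homogeneous set comes from a game. Each colour k keeps a partial homogeneous set H k
   whose elements also have colour k with every element of the reservoir Y, and Y stays large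
   for omega^(o+2) * (c+1)^(s+1), where o is the number of empty H k and s is the number of
   elements that the nonempty H k still lack, summed. The least element x of Y is appended to
   some H k and Y is cut down to the z with col x z = k; k is chosen by the partition property,
   since the measure of Y without x dominates the sum over k of the measures of the c possible
   new states. Opening a new H k costs omega^(o+1) * (c+1)^(s+x+1). This is paid for by the
   growth of large sets: an (omega^(o+1) * 3)-large set above x ends beyond 2^2^2^(x+1), so each
   later omega^(o+2)-block contains that many omega^(o+1)-blocks. As Y shrinks but never
   empties, some H k eventually outgrows its minimum. *)

From mathcomp Require Import all_boot zify.
Set Implicit Arguments. Unset Strict Implicit. Unset Printing Implicit Defensive.

Lemma sorted_cat_ltn (b R : seq nat) a z : sorted ltn (b ++ R) -> a \in b -> z \in R -> a < z.
Proof. by rewrite (sorted_pairwise ltn_trans) pairwise_cat => /and3P [/allrelP + _ _]; apply. Qed.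

Lemma sorted_ltn_cat_ge t (A B : seq nat) z : sorted ltn (A ++ B) ->
  {in A, forall a, t <= a} -> t <= z -> z \in B -> t + size A <= z.
Proof.
elim: A t => [|a A IH] t /=; first by rewrite addn0.
move=> sAB tA tz zB; have /allP aAB := order_path_min ltn_trans sAB.
have ta : t <= a by apply: tA; rewrite mem_head.
have az : a < z by apply: aAB; rewrite mem_cat zB orbT.
rewrite addnS -addSn; apply: IH (path_sorted sAB) _ (leq_ltn_trans ta az) zB.
by move=> a' a'A; apply: leq_ltn_trans ta (aAB _ _); rewrite mem_cat a'A.
Qed.

Lemma sorted_ltn_last t s : sorted ltn (t :: s) -> t + size s <= last t s.
Proof.
elim: s t => [|y s IH] t /=; first by rewrite addn0.
by move=> /andP [ty /IH]; lia.
Qed.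

Lemma sorted_rcons_ltn (s : seq nat) x : sorted ltn s -> {in s, forall p, p < x} ->
  sorted ltn (rcons s x).
Proof.
case: s => [//|a s] /= sas sx; rewrite rcons_path sas /=.
by apply: sx; rewrite mem_last.
Qed.

Lemma sum_ord_update n k (F G : nat -> nat) : k < n -> (forall i, i != k -> G i = F i) ->
  \sum_(i < n) G i + F k = \sum_(i < n) F i + G k.
Proof.
move=> kn GF; rewrite (bigD1 (Ordinal kn)) // [in RHS](bigD1 (Ordinal kn)) //=.
rewrite (eq_bigr (fun i : 'I_n => F i)) => [|i ik]; last first.
  by rewrite GF //; apply: contraNneq ik => ik; apply/val_inj.
by rewrite addnAC [RHS]addnC addnA.
Qed.

Lemma leq_sum_ord n k (F : nat -> nat) : k < n -> F k <= \sum_(i < n) F i.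
Proof. by move=> kn; rewrite (bigD1 (Ordinal kn)) //= leq_addr. Qed.

(** * Fundamental sequences with finite exponents *)

Fixpoint fsl (L : seq nat) (x : nat) : seq nat :=
  match L with
  | [::] => [::]
  | [:: e] => if e is e'.+1 then nseq x e' else [::]
  | e :: r => e :: fsl r x
  end.

Lemma fsl_cons e r x : r != [::] -> fsl (e :: r) x = e :: fsl r x.
Proof. by case: r. Qed.

Lemma fsl_cat L1 L2 x : L2 != [::] -> fsl (L1 ++ L2) x = L1 ++ fsl L2 x.
Proof.
move=> L2_neq0; elim: L1 => // e L1 IH.
by rewrite cat_cons fsl_cons ?IH //; case: L1 {IH} => //; case: L2 L2_neq0.
Qed.

Lemma fs_map_ofin L x : fs (C (map ofin L)) x = C (map ofin (fsl L x)).
Proof.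
elim: L => // e [|e' r] IH.
  case: e => //= e; rewrite (_ : last _ _ = ozero); last by elim: e.
  by rewrite size_nseq -[ozero :: _]/(nseq e.+1 ozero) take_nseq // map_nseq.
by rewrite [fsl _ x]fsl_cons //; move: IH => /= [->].
Qed.

Lemma large_map_ofin L X : large (C (map ofin L)) X <-> foldl fsl L X = [::].
Proof.
rewrite /large; have -> : fs_iter (C (map ofin L)) X = C (map ofin (foldl fsl L X)).
  rewrite /fs_iter; elim: X L => // x X IH L.
  by rewrite -[foldl _ _ (x :: X)]/(foldl fs (fs _ x) X) fs_map_ofin IH.
by split=> [[/(congr1 size)]|->]; rewrite ?size_map => // /eqP; rewrite size_eq0 => /eqP.
Qed.

(* [xlarge L X]: X is L-large but none of its proper prefixes is. *)
Fixpoint xlarge (L X : seq nat) : Prop :=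
  if X is x :: X' then L != [::] /\ xlarge (fsl L x) X' else L = [::].

Lemma xlarge_nil X : xlarge [::] X -> X = [::].
Proof. by case: X => // x X []. Qed.

Lemma foldl_fsl_xlarge L X : foldl fsl L X = [::] ->
  exists X1 X2, X = X1 ++ X2 /\ xlarge L X1.
Proof.
elim: X L => [|x X IH] L /=; first by move->; exists [::], [::].
have [-> _|L_neq0] := eqVneq L [::]; first by exists [::], (x :: X).
by move/IH => [X1 [X2 [-> ?]]]; exists (x :: X1), X2.
Qed.

Lemma xlarge_catP L1 L2 X : L2 != [::] -> xlarge (L1 ++ L2) X ->
  exists X1 X2, [/\ X = X1 ++ X2, xlarge L2 X1 & xlarge L1 X2].
Proof.
elim: X L2 => [|x X IH] L2 L2_neq0 /=.
  by move/(congr1 size); rewrite size_cat; case: L2 L2_neq0 => //= *; lia.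
case=> _; rewrite fsl_cat //.
have [E|/IH] := eqVneq (fsl L2 x) [::].
  by rewrite E cats0 => ?; exists [:: x], X; rewrite /= E.
by move=> /[apply] -[X1 [X2 [-> ? ?]]]; exists (x :: X1), X2.
Qed.

Fixpoint blocks (P : seq nat -> Prop) (k : nat) (R : seq nat) : Prop :=
  if k is k'.+1 then exists R1 R2, [/\ R = R1 ++ R2, P R1 & blocks P k' R2]
  else R = [::].

(* [block e R]: R is exactly omega^e-large; [pblocks e k R]: exactly (omega^e * k)-large. *)
Fixpoint block (e : nat) (R : seq nat) : Prop :=
  if e is e'.+1 then (if R is y :: R' then blocks (block e') y R' else False)
  else exists y, R = [:: y].

Notation pblocks e := (blocks (block e)).

Lemma block_nil e : ~ block e [::].
Proof. by case: e => [|e] //= [y]. Qed.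

Lemma blocks_cat P a b R1 R2 :
  blocks P a R1 -> blocks P b R2 -> blocks P (a + b) (R1 ++ R2).
Proof.
elim: a R1 => [|a IH] R1 /=; first by move->.
move=> [S1 [S2 [-> ? ?]]] ?; exists S1, (S2 ++ R2); rewrite catA; split => //.
exact: IH.
Qed.

Lemma blocks_split P a b R : blocks P (a + b) R ->
  exists R1 R2, [/\ R = R1 ++ R2, blocks P a R1 & blocks P b R2].
Proof.
elim: a R => [|a IH] R /=; first by exists [::], R.
move=> [S1 [S2 [-> ? /IH [T1 [T2 [-> ? ?]]]]]].
by exists (S1 ++ T1), T2; rewrite catA; split => //; exists S1, T1.
Qed.

Lemma blocks_prefix P a b R : a <= b -> blocks P b R ->
  exists R1 R2, R = R1 ++ R2 /\ blocks P a R1.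
Proof.
by move=> /subnKC <- /blocks_split [R1 [R2 [-> ? _]]]; exists R1, R2.
Qed.

Lemma pblocks_nil e k : pblocks e k [::] -> k = 0.
Proof.
case: k => //= k [R1 [R2 [E R1b _]]].
by case: R1 E R1b => [_ /block_nil|].
Qed.

Lemma xlarge_block e X : xlarge [:: e] X -> block e X.
Proof.
elim: e X => [|e IH] [|x X] //= [_]; first by move/xlarge_nil->; exists x.
elim: x X => [|k IHk] X /=; first exact: xlarge_nil.
rewrite -[e :: _]/(nseq k.+1 e) -addn1 nseqD => /xlarge_catP [//|X1 [X2 [-> ? ?]]].
by exists X1, X2; split=> //; [exact: IH | exact: IHk].
Qed.

Lemma xlarge_nseq0 k X : xlarge (nseq k 0) X -> size X = k.
Proof.
elim: k X => [|k IH] X; first by move/xlarge_nil->.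
rewrite -addn1 nseqD => /xlarge_catP [//|X1 [X2 [-> /xlarge_block [y ->] /IH]]].
by rewrite addn1 => <-.
Qed.

Lemma blocks_subseq (P Q : seq nat -> Prop) k R :
  (forall R, P R -> exists2 R', subseq R' R & Q R') ->
  blocks P k R -> exists2 R', subseq R' R & blocks Q k R'.
Proof.
move=> PQ; elim: k R => [|k IH] R /=; first by move->; exists [::].
move=> [R1 [R2 [-> /PQ [R1' ? ?] /IH [R2' ? ?]]]].
by exists (R1' ++ R2'); [exact: cat_subseq | exists R1', R2'].
Qed.

Lemma block_lower e d R : e <= d -> block d R ->
  exists2 R', subseq R' R & block e R' /\ head 0 R' = head 0 R.
Proof.
have lower1 n S : block n.+1 S -> exists2 S', subseq S' S & block n S'.
  elim: n S => [|n IH] [|z S] //.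
    by move=> _; exists [:: z]; rewrite ?sub1seq ?mem_head //=; exists z.
  by move=> /(blocks_subseq IH) [S' ? ?]; exists (z :: S'); rewrite /= ?eqxx.
have lower1_head n S : block n.+1 S ->
    exists2 S', subseq S' S & block n S' /\ head 0 S' = head 0 S.
  case: S => [|y S] //; case: n => [|n].
    by move=> _; exists [:: y]; rewrite ?sub1seq ?mem_head //; split => //; exists y.
  by move=> /(blocks_subseq (lower1 n)) [S' ? ?]; exists (y :: S'); rewrite /= ?eqxx.
move=> /subnKC <-; elim: (d - e) R => [|k IH] R; first by rewrite addn0; exists R.
rewrite addnS => /lower1_head [R1 sub1 [/IH [R2 sub2 [? h2]] h1]].
by exists R2; [apply: subseq_trans sub2 sub1 | rewrite h2 h1].
Qed.

Lemma large_ordinal_decomp c X :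
  large (C (ofin (c + 3) :: ofin 3 :: nseq (c + 4) ozero)) X ->
  exists A D, [/\ size A = c + 4, block (c + 3) D & subseq (A ++ D) X].
Proof.
rewrite (_ : C _ = C (map ofin ([:: c + 3; 3] ++ nseq (c + 4) 0))); last by rewrite /= map_nseq.
move=> /large_map_ofin /foldl_fsl_xlarge [X1 [J [-> ]]].
move=> /xlarge_catP [|A [R [-> /xlarge_nseq0 sizeA]]]; first by rewrite addn4.
rewrite -cat1s => /xlarge_catP [//|B [D [-> _ /xlarge_block bD]]].
exists A, D; split=> //; rewrite -!catA; apply: cat_subseq => //.
by apply: subseq_trans (suffix_subseq B _); apply: prefix_subseq.
Qed.

(** * Natural sums of coefficient vectors *)

(* [xlarge_sum w l n Y]: Y is exactly
   (omega^(l+n-1) * w (l+n-1) + ... + omega^l * w l)-large. *)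
Fixpoint xlarge_sum (w : nat -> nat) (l n : nat) (Y : seq nat) : Prop :=
  if n is n'.+1 then
    exists Y1 Y2, [/\ Y = Y1 ++ Y2, pblocks l (w l) Y1 & xlarge_sum w l.+1 n' Y2]
  else Y = [::].

Definition sublarge N w (X : seq nat) := exists2 Y, subseq Y X & xlarge_sum w 0 N Y.

Lemma xlarge_sum_cat w l a b Y : xlarge_sum w l (a + b) Y <->
  exists Y1 Y2, [/\ Y = Y1 ++ Y2, xlarge_sum w l a Y1 & xlarge_sum w (l + a) b Y2].
Proof.
elim: a l Y => [|a IH] l Y /=.
  by rewrite addn0; split=> [?|[Y1 [Y2 [-> -> ?]]]] //; exists [::], Y.
rewrite -addSnnS; split.
  move=> [Y1 [Y2 [-> ? /IH [Z1 [Z2 [-> ? ?]]]]]].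
  by exists (Y1 ++ Z1), Z2; rewrite catA; split=> //; exists Y1, Z1.
move=> [Y1 [Y2 [-> [Z1 [Z2 [-> ? ?]]] ?]]].
by exists Z1, (Z2 ++ Y2); rewrite catA; split=> //; apply/IH; exists Z2, Y2.
Qed.

Lemma xlarge_sum_ext u w l n Y : (forall i, l <= i < l + n -> u i = w i) ->
  xlarge_sum w l n Y -> xlarge_sum u l n Y.
Proof.
elim: n l Y => [//|n IH] l Y uw /= [Y1 [Y2 [-> ? ?]]].
exists Y1, Y2; rewrite uw; last lia.
by split=> //; apply: IH => // i ?; apply: uw; lia.
Qed.

Lemma xlarge_sum_eq0 w l n Y : (forall i, l <= i < l + n -> w i = 0) ->
  xlarge_sum w l n Y <-> Y = [::].
Proof.
elim: n l Y => [//|n IH] l Y w0 /=.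
have w0S i : l.+1 <= i < l.+1 + n -> w i = 0 by move=> ?; apply: w0; lia.
rewrite w0; last lia.
split=> [[Y1 [Y2 [-> -> /(IH _ _ w0S) ->]]] //|->].
by exists [::], [::]; split=> //; apply/IH.
Qed.

Lemma xlarge_sum_shift w e N Y : e <= N -> (forall i, i < e -> w i = 0) ->
  xlarge_sum w 0 N Y <-> xlarge_sum w e (N - e) Y.
Proof.
move=> eN w0; rewrite -{1}(subnKC eN) xlarge_sum_cat.
have Ye0 Y1 : xlarge_sum w 0 e Y1 <-> Y1 = [::] by apply: xlarge_sum_eq0 => i ?; apply: w0; lia.
split=> [[Y1 [Y2 [-> /Ye0 ->]]] //|?].
by exists [::], Y; split=> //; apply/Ye0.
Qed.

Lemma xlarge_sum_at w N k Y : k < N ->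
  xlarge_sum w 0 N Y <-> exists Ya p Yc,
    [/\ Y = Ya ++ p ++ Yc, xlarge_sum w 0 k Ya, pblocks k (w k) p
      & xlarge_sum w k.+1 (N - k.+1) Yc].
Proof.
move=> kN; have E : N = k + (N - k.+1).+1 by lia.
rewrite {1}E xlarge_sum_cat /=.
split=> [[Ya [R [-> ? /= [p [Yc [-> ? ?]]]]]]|[Ya [p [Yc [-> ? ? ?]]]]].
  by exists Ya, p, Yc.
by exists Ya, (p ++ Yc); split=> //=; exists p, Yc.
Qed.

(* The coefficients of (sum_i omega^i * w i)[x], when e is the least level with w e > 0. *)
Definition wfs (w : nat -> nat) (e x : nat) (i : nat) : nat :=
  if i == e then (w i).-1 else if i.+1 == e then w i + x else w i.

Definition lowest N (w : nat -> nat) e :=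
  [/\ e < N, 0 < w e & forall i, i < e -> w i = 0].

Lemma xlarge_sum_cons N w e x Z : lowest N w e ->
  xlarge_sum w 0 N (x :: Z) <-> xlarge_sum (wfs w e x) 0 N Z.
Proof.
case=> eN /prednK we w0.
have agree l n Y : e < l -> xlarge_sum w l n Y <-> xlarge_sum (wfs w e x) l n Y.
  move=> el; split=> h; apply: xlarge_sum_ext h => i ?;
    by rewrite /wfs; case: eqP; [lia | case: eqP => //; lia].
case: e eN we w0 agree => [|e] eN we w0 agree.
  rewrite -(subnKC eN) /=.
  have -> : wfs w 0 x 0 = (w 0).-1 by rewrite /wfs eqxx.
  rewrite -we; split.
    move=> [Y1 [Y2 [E [R1 [R [EY1 [y ER1] ?]] ?]]]].
    move: E; rewrite EY1 ER1 => -[_ ->].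
    by exists R, Y2; split=> //; rewrite -agree.
  move=> [Y1 [Y2 [-> ? ?]]]; exists (x :: Y1), Y2; split=> //; last by rewrite agree.
  by exists [:: x], Y1; split=> //; exists x.
have u0 i : i < e -> wfs w e.+1 x i = 0.
  by move=> ie; rewrite /wfs !ifN_eq ?w0 //; lia.
rewrite (xlarge_sum_shift _ (ltnW eN) w0) (xlarge_sum_shift _ (ltnW (ltnW eN)) u0).
have [-> ->] : N - e.+1 = (N - e.+2).+1 /\ N - e = (N - e.+2).+2 by lia.
rewrite /=.
have -> : wfs w e.+1 x e = x by rewrite /wfs ltn_eqF // eqxx w0.
have -> : wfs w e.+1 x e.+1 = (w e.+1).-1 by rewrite /wfs eqxx.
rewrite -we; split.
  move=> [Y1 [Y2 [E [[|y R1] [R2 [EY1 // ? ?]]] ?]]].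
  move: E; rewrite EY1 => -[xy ->]; subst y.
  exists R1, (R2 ++ Y2); split; rewrite ?catA //; exists R2, Y2; split=> //.
  by rewrite -agree.
move=> [Y1 [Y2 [-> ? [Y3 [Y4 [-> ? ?]]]]]].
exists (x :: Y1 ++ Y3), Y4; split; rewrite ?catA //; last by rewrite agree.
by exists (x :: Y1), Y3.
Qed.

Lemma xlarge_sum_nil w l n : xlarge_sum w l n [::] -> forall i, l <= i < l + n -> w i = 0.
Proof.
elim: n l => [|n IH] l /=; first lia.
move=> [[|? ?] [[|? ?] [// _ /pblocks_nil wl0 /IH wS0]]] i ?.
by have [->|?] := eqVneq i l => //; apply: wS0; lia.
Qed.

Lemma sublarge_nil N w : sublarge N w [::] -> forall i, i < N -> w i = 0.
Proof. by move=> [Y]; rewrite subseq0 => /eqP-> /xlarge_sum_nil. Qed.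

Lemma sublarge_ext N u w X : (forall i, i < N -> u i = w i) ->
  sublarge N w X -> sublarge N u X.
Proof. by move=> uw [Y ? hY]; exists Y => //; apply: xlarge_sum_ext hY => i ?; apply: uw. Qed.

Lemma sublarge_eq0 N w X : (forall i, i < N -> w i = 0) -> sublarge N w X.
Proof. by move=> w0; exists [::]; rewrite ?sub0seq //; apply/xlarge_sum_eq0. Qed.

Lemma sublarge_le N u w X : (forall i, i < N -> u i <= w i) ->
  sublarge N w X -> sublarge N u X.
Proof.
have xlarge_sum_le l n Y : (forall i, l <= i < l + n -> u i <= w i) ->
    xlarge_sum w l n Y -> exists2 Y', subseq Y' Y & xlarge_sum u l n Y'.
  elim: n l Y => [|n IH] l Y uw /=; first by move->; exists [::].
  move=> [Y1 [Y2 [-> bY1 /IH [|Y2' ? ?]]]]; first by move=> i ?; apply: uw; lia.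
  have [Z1 [Z2 [-> ?]]] := blocks_prefix (uw l ltac:(lia)) bY1.
  exists (Z1 ++ Y2'); last by exists Z1, Y2'.
  by rewrite -catA; apply: cat_subseq => //; apply: subseq_trans (suffix_subseq _ _).
move=> uw [Y sYX /xlarge_sum_le [|Y' sY'Y ?]]; first by move=> i ?; apply: uw.
by exists Y' => //; apply: subseq_trans sYX.
Qed.

Lemma sublarge_adjacent N k u w X : k.+1 < N -> sorted ltn X ->
  (forall i, i != k -> i != k.+1 -> u i = w i) ->
  (forall p q, pblocks k (w k) p -> pblocks k.+1 (w k.+1) q ->
     sorted ltn (p ++ q) -> {subset p ++ q <= X} ->
     exists p' q', [/\ subseq (p' ++ q') (p ++ q), pblocks k (u k) p'
                      & pblocks k.+1 (u k.+1) q']) ->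
  sublarge N w X -> sublarge N u X.
Proof.
move=> kN sX uw local [Y sYX /(xlarge_sum_at _ _ (ltnW kN)) [Ya [p [Yc [EY hYa bp]]]]].
have -> : N - k.+1 = (N - k.+2).+1 by lia.
move=> /= [q [Yd [EYc bq hYd]]].
have spq : subseq (p ++ q) X.
  by apply: subseq_trans sYX; rewrite EY EYc (catA p q Yd); apply/infixW/infix_infix.
have [p' [q' [sub' ? ?]]] := local p q bp bq (subseq_sorted ltn_trans spq sX) (mem_subseq spq).
exists (Ya ++ (p' ++ q') ++ Yd).
  by apply: subseq_trans sYX; rewrite EY EYc (catA p q Yd); do 2 apply: cat_subseq => //.
apply/(xlarge_sum_at _ _ (ltnW kN)); exists Ya, p', (q' ++ Yd); rewrite -!catA; split=> //.
  by apply: xlarge_sum_ext hYa => i ?; apply: uw; lia.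
have -> : N - k.+1 = (N - k.+2).+1 by lia.
by exists q', Yd; split=> //; apply: xlarge_sum_ext hYd => i ?; apply: uw; lia.
Qed.

Lemma sublarge_lower N w i j X : i <= j -> j < N -> sorted ltn X ->
  sublarge N (fun k => w k + (k == j)) X -> sublarge N (fun k => w k + (k == i)) X.
Proof.
move=> + + sX; elim: j => [|j IH] ij jN; first by have -> : i = 0 by lia.
have [->//|ij'] := eqVneq i j.+1.
move=> S; apply: IH; [lia | lia |].
apply: (sublarge_adjacent (k := j)) S => // [k kj kj1|p q + + _ _].
  by rewrite (negbTE kj) (negbTE kj1).
rewrite eqxx ltn_eqF // addn0 addn1 => bp /= [b [q' [-> /(block_lower (leqnSn j)) [b' ? [? _]] ?]]].
exists (p ++ b'), q'; split.
- by rewrite -catA; apply: cat_subseq => //; apply: cat_subseq.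
- rewrite eqxx; apply: blocks_cat bp _ => /=.
  by exists b', [::]; rewrite cats0.
- by rewrite gtn_eqF // addn0.
Qed.

Lemma sublarge_expand N w k x X : 0 < k < N -> 0 < w k -> sorted ltn X ->
  {in X, forall z, x < z} -> sublarge N w X -> sublarge N (wfs w k x.+1) X.
Proof.
case: k => // k /andP [_ kN] /prednK wk sX xX.
apply: (sublarge_adjacent (k := k)) => // [i ? ?|p q bp + _ sub]; first by rewrite /wfs !ifN_eq.
rewrite -wk => /= [[[|v r] [q' [Eq br ?]]]] //; subst q.
have xv : x < v by apply: xX; apply: sub; rewrite mem_cat mem_head orbT.
move: br => /(blocks_prefix xv) [r1 [r2 [-> ?]]].
exists (p ++ r1), q'; rewrite /wfs ltn_eqF // !eqxx; split=> //.
- rewrite -catA; apply: cat_subseq => //; apply: cat_subseq => //.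
  by apply: subseq_trans (subseq_cons _ v); apply: prefix_subseq.
- exact: blocks_cat.
Qed.

Lemma lowestP N w : (forall i, i < N -> w i = 0) \/ exists e, lowest N w e.
Proof.
have [/hasP [i]|/hasPn w0] := boolP (has (fun i => 0 < w i) (iota 0 N)); last first.
  by left=> i iN; apply/eqP; rewrite -leqn0 leqNgt w0 // mem_iota.
rewrite mem_iota => /= iN wi; right.
have [|e /andP [eN we] emin] := ex_minnP (P := fun i => (i < N) && (0 < w i)).
  by exists i; rewrite wi andbT.
exists e; split=> // j je; apply/eqP; rewrite -leqn0 leqNgt; apply/negP => wj.
by have := emin j; rewrite wj andbT; lia.
Qed.

Lemma sublarge_cons N w e x X : lowest N w e ->
  sublarge N (wfs w e x) X -> sublarge N w (x :: X).
Proof.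
by move=> low [Z ? ?]; exists (x :: Z); rewrite /= ?eqxx // (xlarge_sum_cons _ _ low).
Qed.

Lemma sublarge_behead N w e x X : sorted ltn (x :: X) -> lowest N w e ->
  sublarge N w (x :: X) -> sublarge N (wfs w e x) X.
Proof.
move=> sxX low; have [eN we _] := low.
move=> [[|y Z] sY xY]; first by have := xlarge_sum_nil xY eN; lia.
have [Eyx|yx] := eqVneq y x.
  by subst y; exists Z; [move: sY; rewrite /= eqxx | rewrite -(xlarge_sum_cons _ _ low)].
move: sY; rewrite /= (negbTE yx) => sYX.
have SX : sublarge N w X by exists (y :: Z).
have sX := path_sorted sxX; have xX := order_path_min ltn_trans sxX.
case: e low eN we {xY} => [|e] _ eN we.
  by apply: sublarge_le SX => i _; rewrite /wfs; case: eqP => // ->; lia.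
apply: sublarge_le (sublarge_expand (x := x) _ we sX _ SX) => [i _||]; last exact/allP.
- by rewrite /wfs; do 2 case: eqP => //; lia.
- by rewrite eN.
Qed.

(* If the lowest level e' of B is below the lowest level e of A, the step x is taken in B; it is
   repaid by expanding one omega^e of A into omega^(e-1) * (x+1) and moving one omega^(e-1) down
   to level e'. *)
Lemma sublarge_behead_addl N A B e x X : sorted ltn (x :: X) -> lowest N A e ->
  sublarge N (fun i => A i + B i) (x :: X) -> sublarge N (fun i => wfs A e x i + B i) X.
Proof.
move=> sxX lowA; have [eN Ae A0] := lowA.
have sX := path_sorted sxX; have /allP xX := order_path_min ltn_trans sxX.
have [B0|[e' [e'e Be' B0]]] := lowestP e B.
  have low : lowest N (fun i => A i + B i) e.
    by split=> // [|i ie]; [lia | rewrite A0 ?B0].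
  move/(sublarge_behead sxX low); apply: sublarge_ext => i _.
  by rewrite /wfs; repeat (case: eqP => ?; try subst); lia.
have low : lowest N (fun i => A i + B i) e'.
  by split=> [||i ie]; [lia | lia | rewrite A0 ?B0 //; lia].
set W := wfs (fun i => A i + B i) e' x.
move/(sublarge_behead sxX low)/(sublarge_expand (k := e) (x := x)) => /(_ _ _ sX xX) S.
have {S} : sublarge N (fun i => wfs W e x i + (i == e.-1)) X.
  apply: sublarge_ext (S _ _) => [i _||]; rewrite /W /wfs;
    by repeat (case: eqP => ?; try subst); lia.
move=> S; apply: sublarge_le (sublarge_lower (i := e') _ _ sX S) => [i _||]; try lia.
by rewrite /W /wfs; repeat (case: eqP => ?; try subst); lia.
Qed.

Lemma sublarge_partition2 N A B (p : pred nat) X : sorted ltn X ->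
  sublarge N (fun i => A i + B i) X ->
  sublarge N A (filter p X) \/ sublarge N B (filter (predC p) X).
Proof.
elim: X A B => [|x X IH] A B sX S.
  by left; apply: sublarge_eq0 => i iN; have := sublarge_nil S iN; lia.
have [A0|[eA lowA]] := lowestP N A; first by left; apply: sublarge_eq0.
have [B0|[eB lowB]] := lowestP N B; first by right; apply: sublarge_eq0.
have sX' := path_sorted sX; rewrite /=; case: (p x).
  have [SA|SB] := IH _ _ sX' (sublarge_behead_addl sX lowA S); last by right.
  by left; apply: sublarge_cons lowA SA.
have SBA : sublarge N (fun i => B i + A i) (x :: X) by apply: sublarge_ext S => i _; lia.
have SBx := sublarge_behead_addl sX lowB SBA.
have [SA|SB] := IH A (wfs B eB x) sX' (sublarge_ext (fun i _ => addnC _ _) SBx); first by left.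
by right; apply: sublarge_cons lowB SB.
Qed.

Lemma sublarge_partition N c (T : nat -> nat -> nat) (f : nat -> nat) X : 0 < c ->
  sorted ltn X -> {in X, forall z, f z < c} ->
  sublarge N (fun i => \sum_(k < c) T k i) X ->
  exists2 k, k < c & sublarge N (T k) (filter (fun z => f z == k) X).
Proof.
case: c => // c _; elim: c X => [|c IH] X sX fX S.
  exists 0 => //; rewrite (eq_in_filter (a2 := predT)) ?filter_predT.
    by apply: sublarge_ext S => i _; rewrite big_ord1.
  by move=> z /fX; rewrite ltnS leqn0.
have S' : sublarge N (fun i => \sum_(k < c.+1) T k i + T c.+1 i) X.
  by apply: sublarge_ext S => i _; rewrite [RHS]big_ord_recr.
have [{}S|{}S] := sublarge_partition2 (fun z => f z != c.+1) sX S'; last first.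
  exists c.+1 => //; rewrite -(eq_filter (a1 := predC (fun z => f z != c.+1))) //.
  by move=> z /=; rewrite negbK.
have [|k kc Sk] := IH _ (sorted_filter ltn_trans _ sX) _ S.
  by move=> z; rewrite mem_filter => /andP [fz /fX]; rewrite ltnS leq_eqVlt (negbTE fz).
exists k; first lia.
rewrite -(eq_filter (a1 := predI (fun z => f z == k) (fun z => f z != c.+1))) ?filter_predI //.
by move=> z /=; case: eqP => // ->; rewrite ltn_eqF.
Qed.

Definition monomial (g n : nat) : nat -> nat := fun i => if i == g then n else 0.

Lemma sublarge_monomial N g n n' R : g < N -> n <= n' -> pblocks g n' R ->
  sublarge N (monomial g n) R.
Proof.
move=> gN nn' /(blocks_prefix nn') [R1 [R2 [-> bR1]]].
exists R1; first exact: prefix_subseq.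
apply/(xlarge_sum_at _ _ gN); exists [::], R1, [::]; rewrite cats0 /monomial eqxx.
by split=> //; apply/xlarge_sum_eq0 => // i ?; rewrite ifN_eq //; lia.
Qed.

(** * Growth inside large sets *)

Lemma blocks_iter_bound (P : seq nat -> Prop) (g : nat -> nat) k R t :
  {homo g : a b / a <= b} ->
  (forall b t, P b -> sorted ltn b -> {in b, forall z, t < z} -> exists2 z, z \in b & g t <= z) ->
  blocks P k R -> sorted ltn R -> {in R, forall z, t < z} -> 0 < k ->
  exists2 z, z \in R & iter k g t <= z.
Proof.
move=> g_homo Pg.
have iter_homo n a a' : a <= a' -> iter n g a <= iter n g a'.
  by move=> aa'; elim: n => //= n IHn; apply: g_homo.
elim: k R t => [//|k IH] R t /= [b [R' [-> Pb bR']]] sR tR _.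
have [sb sR'] := cat_sorted2 sR.
have [z1 z1b gz1] : exists2 z1, z1 \in b & g t <= z1.
  by apply: Pg => // z zb; apply: tR; rewrite mem_cat zb.
case: k IH bR' => [|k] IH bR'; first by exists z1; rewrite ?mem_cat ?z1b.
have [|z zR' gz] := IH R' z1 bR' sR' _ isT; first by move=> z; apply: sorted_cat_ltn sR z1b.
exists z; first by rewrite mem_cat zR' orbT.
by apply: leq_trans gz; rewrite iterSr; apply: iter_homo.
Qed.

Lemma pblocks0_size k R : pblocks 0 k R -> size R = k.
Proof.
elim: k R => [|k IH] R /=; first by move->.
by move=> [R1 [R2 [-> [y ->] /IH <-]]].
Qed.

Lemma block1_bound b t : block 1 b -> sorted ltn b -> {in b, forall z, t < z} ->
  exists2 z, z \in b & 2 * t.+1 <= z.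
Proof.
case: b => [//|s r] /= /pblocks0_size sizer sb tb.
exists (last s r); first exact: mem_last.
by have := sorted_ltn_last sb; have := tb s (mem_head _ _); lia.
Qed.

Lemma block_bound h b t : 2 <= h -> block h b -> sorted ltn b -> {in b, forall z, t < z} ->
  exists2 z, z \in b & 2 ^ t.+1 <= z.
Proof.
move=> h2 /(block_lower h2) [b' sub [+ _]] sb tb; case: b' sub => [//|s r] sub /= br.
have sb' := subseq_sorted ltn_trans sub sb.
have ts : t < s by apply/tb/(mem_subseq sub); rewrite mem_head.
have g_homo : {homo (fun a => 2 * a.+1) : a a' / a <= a'} by move=> a a' ?; lia.
have sr : {in r, forall z, s < z} by apply/allP; apply: order_path_min ltn_trans sb'.
have [|z zr bz] := blocks_iter_bound g_homo block1_bound br (path_sorted sb') sr; first lia.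
have pow_le n a : 0 < a -> 2 ^ n <= iter n (fun a => 2 * a.+1) a.
  by move=> a0; elim: n => //= n IHn; rewrite expnS; lia.
exists z; first by apply: (mem_subseq sub); rewrite inE zr orbT.
apply: leq_trans (leq_pexp2l _ ts) (leq_trans (pow_le s s _) bz) => //; lia.
Qed.

Definition tower3 x := 2 ^ 2 ^ 2 ^ x.+1.

Lemma pblocks_tower3 h k p t : 2 <= h -> 3 <= k -> pblocks h k p -> sorted ltn p ->
  {in p, forall z, t < z} -> exists2 z, z \in p & tower3 t <= z.
Proof.
move=> h2 k3 bp sp tp.
have g_homo : {homo (fun a => 2 ^ a.+1) : a a' / a <= a'} by move=> a a' ?; apply: leq_pexp2l.
have [|z zp bz] := blocks_iter_bound g_homo (fun b t => @block_bound h b t h2) bp sp tp; first lia.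
exists z => //; apply: leq_trans bz; rewrite -(subnK k3) iterD.
have iter_ge n a : a <= iter n (fun a => 2 ^ a.+1) a.
  elim: n => //= n IHn; apply: leq_trans IHn (ltnW (leq_trans (ltn_expl (m := 2) _ _) _)) => //.
  exact: leq_pexp2l.
apply: leq_trans (iter_ge _ _); rewrite /tower3 /=.
by do 2 (apply: leq_pexp2l => //; apply: leqW); apply: leq_pexp2l.
Qed.

Lemma expn_le_tower3 c s x : c <= x -> s <= x * x -> c.+1 ^ (s + x).+1 <= tower3 x.
Proof.
move=> cx sx; set n := (s + x).+1.
have x_lt_2x : x.+1 <= 2 ^ x by apply: ltn_expl.
have three_x : 3 * x <= 2 ^ x.+1.
  by elim: x {cx sx n x_lt_2x} => // x IH; rewrite expnS; case: x IH => // x; rewrite expnS; lia.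
apply: (leq_trans (n := (2 ^ x) ^ n)); first by rewrite leq_exp2r //; lia.
rewrite -expnM /tower3 leq_exp2l // (leq_trans (n := x.+1 ^ 3)) //; first by rewrite /n; nia.
apply: (leq_trans (n := 2 ^ (3 * x))); first by rewrite mulnC expnM leq_exp2r.
by rewrite leq_exp2l.
Qed.

Lemma pblocks_shrink h J E q : pblocks h.+1 J q -> {in q, forall z, E <= z} ->
  exists2 q', subseq q' q & pblocks h (J * E) q'.
Proof.
elim: J q => [|J IH] q /=; first by move->; exists [::].
move=> [b [q2 [-> + bq2]]]; case: b => [//|u r] br Eq.
have Eu : E <= u by apply: Eq; rewrite mem_head.
have [r1 [r2 [Er br1]]] := blocks_prefix Eu br.
have [q2' sub2 bq2'] : exists2 q2', subseq q2' q2 & pblocks h (J * E) q2'.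
  by apply: (IH q2 bq2) => z zq2; apply: Eq; rewrite inE mem_cat zq2 !orbT.
exists (r1 ++ q2'); last by rewrite mulSn; apply: blocks_cat.
rewrite Er; apply: cat_subseq => //.
by apply: subseq_trans (subseq_cons _ u); apply: prefix_subseq.
Qed.

(* The first three omega^h-blocks above x already end beyond tower3 x, so each of the next J
   omega^(h+1)-blocks contains E omega^h-blocks. *)
Lemma sublarge_grow N w h x J E X : h.+1 < N -> 2 <= h -> sorted ltn X ->
  {in X, forall z, x < z} -> 3 <= w h -> J <= w h.+1 -> E <= tower3 x -> sublarge N w X ->
  sublarge N (fun i => if i == h then w h + J * E else if i == h.+1 then w h.+1 - J else w i) X.
Proof.
move=> hN h2 sX xX wh Jw Ex.
apply: (sublarge_adjacent (k := h)) => // [i hi hi1|p q bp bq spq sub].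
  by rewrite (negbTE hi) (negbTE hi1).
have [z zp xz] : exists2 z, z \in p & tower3 x <= z.
  apply: pblocks_tower3 h2 wh bp (subseq_sorted ltn_trans (prefix_subseq p q) spq) _.
  by move=> z zp; apply/xX/sub; rewrite mem_cat zp.
move: bq; rewrite -(subnK Jw) addnC => /blocks_split [q1 [q2 [Eq bq1 bq2]]].
have [q1' sub1 bq1'] : exists2 q1', subseq q1' q1 & pblocks h (J * E) q1'.
  apply: pblocks_shrink bq1 _ => y yq1; apply: leq_trans Ex (leq_trans xz (ltnW _)).
  by apply: sorted_cat_ltn spq zp _; rewrite Eq mem_cat yq1.
exists (p ++ q1'), q2; rewrite eqxx gtn_eqF // eqxx addKn; split=> //.
- by rewrite Eq -catA; apply: cat_subseq => //; apply: cat_subseq.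
- exact: blocks_cat.
Qed.

(* Removing x from an (omega^(o+2) * K)-large set leaves omega^(o+2) * (K-1) + omega^(o+1) * x;
   for o > 0 the x >= 3 copies of omega^(o+1) let [sublarge_grow] trade J copies of omega^(o+2)
   for J * E copies of omega^(o+1). *)
Lemma sublarge_behead_monomial N o K J E x Y w : o.+2 < N -> 3 <= x -> E <= tower3 x ->
  J < K -> sorted ltn (x :: Y) ->
  (forall i, w i <= (i == o.+1) * ((0 < o) * (J * E)) + (i == o.+2) * (K.-1 - J)) ->
  sublarge N (monomial o.+2 K) (x :: Y) -> sublarge N w Y.
Proof.
move=> oN x3 Ex JK sxY wle.
have low : lowest N (monomial o.+2 K) o.+2.
  by split=> // [|i io]; rewrite /monomial ?eqxx ?ltn_eqF //; lia.
move=> /(sublarge_behead sxY low) S.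
have sY := path_sorted sxY; have /allP xY := order_path_min ltn_trans sxY.
case: o oN low wle S => [|o] oN _ wle S.
  apply: sublarge_le S => i _; have := wle i.
  by rewrite /wfs /monomial; repeat (case: eqP => ?; try subst); lia.
have [lvl2 lvl3] : 3 <= wfs (monomial o.+3 K) o.+3 x o.+2 /\ J <= wfs (monomial o.+3 K) o.+3 x o.+3.
  by rewrite /wfs /monomial; repeat (case: eqP => ?); lia.
apply: sublarge_le (sublarge_grow oN isT sY xY lvl2 lvl3 Ex S) => i _.
by have := wle i; rewrite /wfs /monomial; repeat (case: eqP => ?; try subst); lia.
Qed.

(** * The colouring game *)

Definition homogeneous (col : nat -> nat -> nat) k (s : seq nat) :=
  forall p q, p \in s -> q \in s -> p < q -> col p q = k.

Lemma homogeneous_rcons col k s x : homogeneous col k s ->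
  {in s, forall p, p < x /\ col p x = k} -> homogeneous col k (rcons s x).
Proof.
move=> hom sx p q; rewrite !mem_rcons !inE.
case/predU1P => [->|ps]; case/predU1P => [->|qs]; first lia.
- by have [qx _] := sx q qs; lia.
- by have [_ ->] := sx p ps.
- exact: hom.
Qed.

Definition has_large_homogeneous (X : seq nat) (col : nat -> nat -> nat) :=
  exists H : seq nat,
    [/\ sorted ltn H, {subset H <= X}, H != [::], exists k, homogeneous col k H
      & head 0 H < size H].

Section Game.

Variables (c : nat) (X : seq nat) (col : nat -> nat -> nat).

Definition nempty (H : nat -> seq nat) := \sum_(k < c) (H k == [::]).

Definition deficit (s : seq nat) := if s is a :: _ then a.+1 - size s else 0.

Definition deficits (H : nat -> seq nat) := \sum_(k < c) deficit (H k).

Definition budget s := c.+1 ^ s.+1.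

Definition measure H := monomial (nempty H).+2 (budget (deficits H)).

Definition push (H : nat -> seq nat) k x := fun k' => if k' == k then rcons (H k) x else H k'.

Record state (Y : seq nat) (H : nat -> seq nat) : Prop := State {
  state_sorted : sorted ltn Y;
  state_sub : {subset Y <= X};
  state_min : {in Y, forall z, c + 7 <= z};
  state_Hsorted : forall k, k < c -> sorted ltn (H k);
  state_HX : forall k, k < c -> {subset H k <= X};
  state_attached : forall k p z, k < c -> p \in H k -> z \in Y -> p < z /\ col p z = k;
  state_hom : forall k, k < c -> homogeneous col k (H k);
  state_small : forall k, k < c -> H k != [::] -> size (H k) <= head 0 (H k);
  state_deficit : {in Y, forall z, deficits H <= z * z};
  state_large : sublarge (c + 3) (measure H) Y
}.

Lemma nempty_le H : nempty H <= c.
Proof.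
apply: (@leq_trans (\sum_(k < c) 1)); first by apply: leq_sum => k _; apply: leq_b1.
by rewrite sum_nat_const card_ord muln1.
Qed.

Lemma budget_gt s : c < budget s.
Proof. by rewrite /budget expnS leq_pmulr // expn_gt0. Qed.

Lemma budget_pred s : 0 < s -> c * budget s.-1 + c < budget s.
Proof.
case: s => // s _; have := budget_gt s.
by rewrite /budget /= [c.+1 ^ s.+2]expnS mulSn; lia.
Qed.

Lemma state_nonnil Y H : state Y H -> Y != [::].
Proof.
case=> _ _ _ _ _ _ _ _ _ S; apply/eqP => Y0; move: S; rewrite Y0 => /sublarge_nil.
move=> /(_ (nempty H).+2); rewrite /measure /monomial eqxx.
by have := nempty_le H; have := budget_gt (deficits H); lia.
Qed.

Lemma nempty_push H k x : k < c -> nempty (push H k x) = nempty H - (H k == [::]).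
Proof.
move=> kc; have agree i : i != k -> (push H k x i == [::] : nat) = (H i == [::]).
  by move=> ik; rewrite /push ifN_eq.
have := sum_ord_update (F := fun i => H i == [::] : nat)
  (G := fun i => push H k x i == [::] : nat) kc agree.
by rewrite -/(nempty _) -/(nempty _) /push eqxx; case: (H k) => /=; lia.
Qed.

Lemma deficits_push H k x : k < c -> (H k != [::] -> size (H k) <= head 0 (H k)) ->
  deficits (push H k x) = if H k == [::] then deficits H + x else (deficits H).-1.
Proof.
move=> kc small; have agree i : i != k -> deficit (push H k x i) = deficit (H i).
  by move=> ik; rewrite /push ifN_eq.
have := sum_ord_update (F := fun i => deficit (H i)) (G := fun i => deficit (push H k x i))
  kc agree.
rewrite -/(deficits _) -/(deficits _) /push eqxx.
case: (H k) small => [|a s] small /=; first lia.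
by have := small isT; rewrite size_rcons /=; lia.
Qed.

Lemma measure_push_le H k x i : k < c -> (H k != [::] -> size (H k) <= head 0 (H k)) ->
  measure (push H k x) i <=
    (i == (nempty H).+1) * ((0 < nempty H) * budget (deficits H + x)) +
    (i == (nempty H).+2) * ((0 < deficits H) * budget (deficits H).-1).
Proof.
move=> kc small; rewrite /measure nempty_push // deficits_push //.
have := leq_sum_ord (fun j => H j == [::] : nat) kc.
have := leq_sum_ord (fun j => deficit (H j)) kc.
rewrite -/(nempty H) -/(deficits H) /monomial.
case: (H k) small => [|a s] small /= s_ge o_ge.
  have -> : (nempty H - 1).+2 = (nempty H).+1 by lia.
  by case: eqP => [->|_] //; rewrite ltn_eqF // o_ge /=; lia.
have s_gt0 : 0 < deficits H by have := small isT; rewrite /=; lia.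
by rewrite subn0; case: eqP => [->|_] //; rewrite gtn_eqF // s_gt0 /=; lia.
Qed.

Lemma sum_measure_push_le H x i :
  (forall k, k < c -> H k != [::] -> size (H k) <= head 0 (H k)) ->
  \sum_(k < c) measure (push H k x) i <=
    (i == (nempty H).+1) * ((0 < nempty H) * (c * budget (deficits H + x))) +
    (i == (nempty H).+2) * ((budget (deficits H)).-1 - c).
Proof.
move=> small; set E := budget (deficits H + x).
apply: (@leq_trans (c * ((i == (nempty H).+1) * ((0 < nempty H) * E) +
                         (i == (nempty H).+2) * ((0 < deficits H) * budget (deficits H).-1)))).
  rewrite -[c in c * _]card_ord -sum_nat_const; apply: leq_sum => k _.
  by apply: measure_push_le => //; apply: small.
have := @budget_pred (deficits H); case: (posnP (deficits H)) => [-> _|_ /(_ isT)].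
  by case: eqP => _; case: (0 < nempty H); rewrite /= ?muln0 ?addn0 ?mul1n //; lia.
by case: eqP => _; case: eqP => _; case: (0 < nempty H); rewrite /= ?muln0 ?addn0 ?mul1n; lia.
Qed.

Lemma sublarge_push_sum x Y H : state (x :: Y) H ->
  sublarge (c + 3) (fun i => \sum_(k < c) measure (push H k x) i) Y.
Proof.
case=> sxY _ xYmin _ _ _ _ small defY large.
have x_ge : c + 7 <= x := xYmin x (mem_head _ _).
apply: (sublarge_behead_monomial (J := c) (E := budget (deficits H + x)) _ _ _ (budget_gt _) sxY
  _ large).
- by have := nempty_le H; lia.
- lia.
- by apply: expn_le_tower3 (defY x (mem_head _ _)); lia.
- by move=> i; apply: sum_measure_push_le.
Qed.

Lemma state_finish x Y H k : state (x :: Y) H -> k < c -> H k != [::] ->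
  size (H k) = head 0 (H k) -> has_large_homogeneous X col.
Proof.
case=> _ sub _ Hs HX att hom _ _ _ kc Hk0 sizeHk.
have Hx : {in H k, forall p, p < x /\ col p x = k} by move=> p hp; apply: att; rewrite ?mem_head.
exists (rcons (H k) x); split.
- by apply: sorted_rcons_ltn (Hs k kc) _ => p /Hx [].
- by move=> z; rewrite mem_rcons inE => /predU1P [->|/(HX k kc)] //; apply: sub; rewrite mem_head.
- by case: (H k).
- by exists k; apply: homogeneous_rcons (hom k kc) Hx.
- by rewrite size_rcons; case: (H k) Hk0 sizeHk => //= a s _ ->.
Qed.

Lemma state_push x Y H k : state (x :: Y) H -> k < c ->
  (H k != [::] -> size (H k) < head 0 (H k)) ->
  sublarge (c + 3) (measure (push H k x)) [seq z <- Y | col x z == k] ->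
  state [seq z <- Y | col x z == k] (push H k x).
Proof.
case=> sxY sub xYmin Hs HX att hom small defY _ kc strict large.
have x_ge := xYmin x (mem_head _ _).
have /allP xY := order_path_min ltn_trans sxY.
have inY2 z : z \in [seq z <- Y | col x z == k] -> [/\ z \in x :: Y, x < z & col x z = k].
  by rewrite mem_filter => /andP [/eqP <- zY]; rewrite inE zY orbT xY.
have Hx : {in H k, forall p, p < x /\ col p x = k} by move=> p hp; apply: att; rewrite ?mem_head.
have pushE k' : push H k x k' = if k' == k then rcons (H k) x else H k' by [].
constructor.
- by apply: sorted_filter; [apply: ltn_trans | apply: path_sorted sxY].
- by move=> z /inY2 [/sub].
- by move=> z /inY2 [/xYmin].
- move=> k' k'c; rewrite pushE; case: (k' =P k) => _; last exact: Hs.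
  by apply: sorted_rcons_ltn (Hs k kc) _ => p /Hx [].
- move=> k' k'c p; rewrite pushE; case: (k' =P k) => _; last exact: HX.
  by rewrite mem_rcons inE => /predU1P [->|/(HX k kc)] //; apply: sub; rewrite mem_head.
- move=> k' p z k'c; rewrite pushE => + /inY2 [zxY xz colz].
  case: (k' =P k) => [->|_] pH; last exact: att.
  by move: pH; rewrite mem_rcons inE => /predU1P [->|pH] //; apply: att.
- move=> k' k'c; rewrite pushE; case: (k' =P k) => [->|_]; last exact: hom.
  exact: homogeneous_rcons (hom k kc) Hx.
- move=> k' k'c; rewrite pushE; case: (k' =P k) => _ Hk'0; last exact: small.
  by rewrite size_rcons; case: (H k) strict => [_|a s /(_ isT)] /=; lia.
- move=> z /inY2 [_ xz _]; rewrite deficits_push //; last exact: small.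
  by have := defY x (mem_head _ _); case: (H k == [::]) => /=; nia.
- exact: large.
Qed.

Lemma state_init Y : sorted ltn Y -> {subset Y <= X} -> {in Y, forall z, c + 7 <= z} ->
  sublarge (c + 3) (monomial c.+2 c.+1) Y -> state Y (fun _ => [::]).
Proof.
move=> sY sub Ymin large.
have deficit0 : deficits (fun _ => [::]) = 0 by rewrite /deficits big1.
have nempty0 : nempty (fun _ => [::]) = c by rewrite /nempty sum_nat_const card_ord muln1.
constructor=> //; first by rewrite deficit0.
by rewrite /measure nempty0 deficit0 /budget expn1.
Qed.

Hypothesis c_gt0 : 0 < c.
Hypothesis col_lt : forall x y, x \in X -> y \in X -> x < y -> col x y < c.

Lemma state_step Y H : state Y H ->
  has_large_homogeneous X col \/ exists Y' H', size Y' < size Y /\ state Y' H'.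
Proof.
case: Y => [/state_nonnil //|x Y] st.
have [/existsP [[k kc] /andP [Hk0 /eqP sizeHk]]|/existsPn none] :=
  boolP [exists k : 'I_c, (H k != [::]) && (size (H k) == head 0 (H k))].
  by left; apply: state_finish st kc Hk0 sizeHk.
right.
have strict k : k < c -> H k != [::] -> size (H k) < head 0 (H k).
  move=> kc Hk0; have := none (Ordinal kc); rewrite /= Hk0 /= ltn_neqAle => -> /=.
  exact: state_small st _ kc Hk0.
have colY : {in Y, forall z, col x z < c}.
  have /allP xY := order_path_min ltn_trans (state_sorted st).
  move=> z zY; apply: col_lt; last exact: xY.
    by apply: (state_sub st); rewrite mem_head.
  by apply: (state_sub st); rewrite inE zY orbT.
have [k kc S] := sublarge_partition (T := fun k => measure (push H k x)) (f := col x)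
  c_gt0 (path_sorted (state_sorted st)) colY (sublarge_push_sum st).
exists [seq z <- Y | col x z == k], (push H k x).
by split; [rewrite size_filter ltnS count_size | exact: state_push st kc (strict k kc) S].
Qed.

Lemma state_solution Y H : state Y H -> has_large_homogeneous X col.
Proof.
move: {2}(size Y) (leqnn (size Y)) => n; elim: n Y H => [|n IH] Y H sY st.
  by case: Y sY st => // _ /state_nonnil.
have [//|[Y' [H' [sY' st']]]] := state_step st.
by apply: IH st'; lia.
Qed.
End Game.

Theorem lemma4p3 (c : nat) (X : seq nat)
  (HXs : sorted ltn X)
  (HX2 : forall x, x \in X -> 2 < x)
  (HXl : large (C (ofin (c + 3) :: ofin 3 :: nseq (c + 4) ozero)) X)
  (col : nat -> nat -> nat)
  (Hcol : forall x y, x \in X -> y \in X -> x < y -> col x y < c) :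
  exists H : seq nat,
    [/\ sorted ltn H, {subset H <= X}, H != [::],
        (exists k, forall x y, x \in H -> y \in H -> x < y -> col x y = k)
      & head 0 H < size H].
Proof.
have [A [D [sizeA bD sADX]]] := large_ordinal_decomp HXl.
have sAD := subseq_sorted ltn_trans sADX HXs.
have {sADX} ADX := mem_subseq sADX.
have Dmin : {in D, forall z, c + 7 <= z}.
  move=> z zD; have z3 : 2 < z by apply/HX2/ADX; rewrite mem_cat zD orbT.
  have : 3 + size A <= z; last by rewrite sizeA; lia.
  by apply: sorted_ltn_cat_ge sAD _ z3 zD => a aA; apply/HX2/ADX; rewrite mem_cat aA.
case: c HXl Hcol sizeA bD Dmin => [|c] _ Hcol sizeA bD Dmin.
  case: A sizeA sAD ADX => [|a0 [|a1 A]] // _ /andP [a01 _] ADX.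
  have a1X : a1 \in X by apply: ADX; rewrite !inE eqxx orbT.
  by have := Hcol a0 a1 (ADX _ (mem_head _ _)) a1X a01.
case: D bD Dmin sAD ADX => [/block_nil //|d R] bD Dmin sAD ADX.
apply: (state_solution (c := c.+1) isT Hcol (H := fun _ => [::]) (Y := R)).
apply: state_init.
- by case/cat_sorted2: sAD => _ /path_sorted.
- by move=> z zR; apply: ADX; rewrite mem_cat inE zR !orbT.
- by move=> z zR; apply: Dmin; rewrite inE zR orbT.
- move: bD; rewrite addn3 /= => bD.
  apply: (sublarge_monomial (n' := d)) => //; last by have := Dmin d (mem_head _ _); lia.
Qed.
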